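(* Let $G$ be a finite group and $(\Gamma,\rho)$ a voltage graph. Then $(\Gamma,\rho)$ is structurally balanced if and only if $f(c)=\mathbf 1$ for every semi-cycle $c$ of $\Gamma$.
   Context: $\Gamma=(V,E)$ is a simple digraph, $e_{ij}$ the edge $v_i\to v_j$, $\rho:E\to G$, $\mathbf 1$ the identity of $G$. A semi-walk is $w=v_{i_1}a_1\dots a_{n-1}v_{i_n}$ with each $a_j\in\{e_{i_ji_{j+1}},e_{i_{j+1}i_j}\}$; closed if $v_{i_1}=v_{i_n}$; a semi-cycle is a closed semi-walk with no repeated vertices other than the starting vertex equal to the ending vertex (a single vertex is a trivial semi-cycle). Net voltage $f(w)=\bar\rho(a_1)\cdots\bar\rho(a_{n-1})$, $\bar\rho(a_j)=\rho(a_j)$ if $a_j=e_{i_ji_{j+1}}$ and $\rho(a_j)^{-1}$ otherwise; $f=\mathbf 1$ on a single vertex. $(\Gamma,\rho)$ is structurally balanced if $f(w)=\mathbf 1$ for every closed semi-walk $w$. *)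

From mathcomp Require Import all_boot all_fingroup.
Set Implicit Arguments. Unset Strict Implicit. Unset Printing Implicit Defensive.
Local Open Scope group_scope.

(* A simple digraph: finite vertex type V with an irreflexive edge relation
   [e]; [e x y] means the edge e_{xy} : x -> y exists.  A voltage assignment is
   [rho : V -> V -> gT], only its values on edges are relevant. *)
Definition simple_digraph (V : finType) (e : rel V) : Prop := irreflexive e.

(* A semi-walk v_{i_1} a_1 ... v_{i_n} is represented by its start vertex x and
   a list of steps (y, b): move to y along a_j, where b = true means
   a_j = e_{xy} (forward edge) and b = false means a_j = e_{yx} (backward). *)
Definition step_ok (V : finType) (e : rel V) (x : V) (s : V * bool) : bool :=
  if s.2 then e x s.1 else e s.1 x.

Fixpoint semiwalk (V : finType) (e : rel V) (x : V) (p : seq (V * bool)) : bool :=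
  match p with
  | [::] => true
  | s :: p' => step_ok e x s && semiwalk e s.1 p'
  end.

Definition closed_semiwalk (V : finType) (e : rel V) (x : V) (p : seq (V * bool)) : bool :=
  semiwalk e x p && (last x (map fst p) == x).

(* The vertex list is x :: map fst p with last element x, so this means the
   vertices v_{i_2},...,v_{i_n} are pairwise distinct.  p = [::] is the
   trivial semi-cycle. *)
Definition semicycle (V : finType) (e : rel V) (x : V) (p : seq (V * bool)) : bool :=
  closed_semiwalk e x p && uniq (map fst p).

Fixpoint net_voltage (V : finType) (gT : finGroupType) (rho : V -> V -> gT)
    (x : V) (p : seq (V * bool)) : gT :=
  match p with
  | [::] => 1
  | s :: p' => (if s.2 then rho x s.1 else (rho s.1 x)^-1) * net_voltage rho s.1 p'
  end.

Definition structurally_balanced (V : finType) (gT : finGroupType) (e : rel V)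
    (rho : V -> V -> gT) : Prop :=
  forall x p, closed_semiwalk e x p -> net_voltage rho x p = 1.

(* A closed semi-walk that is not a semi-cycle revisits some vertex y; cutting
   it at two visits of y yields a closed semi-walk q at y and a shorter closed
   semi-walk r with the same endpoints, and f(walk) = f(r) as soon as f(q) = 1.
   Induction on length reduces every closed semi-walk to semi-cycles. *)

From mathcomp Require Import all_boot all_fingroup zify.
Set Implicit Arguments. Unset Strict Implicit. Unset Printing Implicit Defensive.
Local Open Scope group_scope.

Section SemiWalks.
Variables (gT : finGroupType) (V : finType) (e : rel V) (rho : V -> V -> gT).

Lemma net_voltage_cat x (p q : seq (V * bool)) :
  net_voltage rho x (p ++ q) =
  net_voltage rho x p * net_voltage rho (last x (map fst p)) q.
Proof.
elim: p x => [|s p IHp] x /=; first by rewrite mul1g.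
by rewrite IHp mulgA.
Qed.

Lemma semiwalk_cat x (p q : seq (V * bool)) :
  semiwalk e x (p ++ q) = semiwalk e x p && semiwalk e (last x (map fst p)) q.
Proof. by elim: p x => [|s p IHp] x //=; rewrite IHp andbA. Qed.

Lemma mem_map_fst_split (y z : V) (s : seq (V * bool)) : y \in map fst s ->
  exists s1 s2, [/\ s = s1 ++ s2, s1 != [::] & last z (map fst s1) = y].
Proof.
elim: s z => [|t s IHs] z //=; rewrite in_cons => /orP[/eqP ->|/IHs].
  by exists [:: t], s.
move=> /(_ z) [s1 [s2 [-> s1_nil <-]]]; exists (t :: s1), s2.
by case: s1 s1_nil.
Qed.

Lemma not_uniq_split_loop x (p : seq (V * bool)) : ~~ uniq (map fst p) ->
  exists p1 p2 p3, [/\ p = p1 ++ p2 ++ p3, p1 != [::], p2 != [::] &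
    last (last x (map fst p1)) (map fst p2) = last x (map fst p1)].
Proof.
elim: p x => [|s p IHp] x //=; rewrite negb_and negbK => /orP[s_in_p|/IHp].
  have [p2 [p3 [-> p2_nil p2_last]]] := mem_map_fst_split s.1 s_in_p.
  by exists [:: s], p2, p3.
move=> /(_ s.1) [p1 [p2 [p3 [-> _ p2_nil p2_last]]]].
by exists (s :: p1), p2, p3.
Qed.

Lemma closed_semiwalk_split_loop x (p : seq (V * bool)) :
  closed_semiwalk e x p -> ~~ uniq (map fst p) ->
  exists y q r, [/\ closed_semiwalk e y q, closed_semiwalk e x r,
    size q < size p, size r < size p &
    net_voltage rho y q = 1 -> net_voltage rho x p = net_voltage rho x r].
Proof.
move=> closed_p /(not_uniq_split_loop x) [p1 [p2 [p3 [def_p p1_nil p2_nil loop]]]].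
move: closed_p; rewrite /closed_semiwalk def_p !semiwalk_cat !map_cat !last_cat loop.
case/andP=> /and3P[walk1 walk2 walk3] end_x.
have size1 : 0 < size p1 by case: (p1) p1_nil.
have size2 : 0 < size p2 by case: (p2) p2_nil.
exists (last x (map fst p1)), p2, (p1 ++ p3); split.
- by rewrite walk2 loop eqxx.
- by rewrite semiwalk_cat map_cat last_cat walk1 walk3.
- by rewrite !size_cat; lia.
- by rewrite !size_cat; lia.
- by rewrite !net_voltage_cat loop => ->; rewrite mul1g.
Qed.

End SemiWalks.

Theorem lemma2 (gT : finGroupType) (V : finType) (e : rel V)
    (rho : V -> V -> gT) (He : simple_digraph e) :
  structurally_balanced e rho <->
  (forall (x : V) (p : seq (V * bool)), semicycle e x p ->
     net_voltage rho x p = 1%g).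
Proof.
split=> [balanced x p /andP[closed_p _]|cycles_balanced x p]; first exact: balanced.
have [n] := ubnP (size p); elim: n x p => // n IHn x p size_p closed_p.
have [uniq_p|not_uniq_p] := boolP (uniq (map fst p)).
  by apply: cycles_balanced; rewrite /semicycle closed_p.
have [y [q [r [closed_q closed_r size_q size_r ->]]]] :=
  closed_semiwalk_split_loop rho closed_p not_uniq_p.
- exact: IHn (leq_trans size_r size_p) closed_r.
- exact: IHn (leq_trans size_q size_p) closed_q.
Qed.
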